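(* Let $S$ be a financial system with payment priorities, $v$ a bank, $x\ge 0$, and $Q\ge 0$ a number such that every solution $r$ of $S$ satisfies $q_v(r)\le Q$. Let $S'$ be the system obtained from $S$ by replacing $e_v$ with $e_v+x$ (everything else unchanged). Then every solution $r'$ of $S'$ satisfies $q'_v(r')\le Q+x$, where $q'_v$ is the payoff of $v$ in $S'$. More precisely, if $r'$ is a solution of $S'$ with $q'_v(r')>x$, then $r'$ is also a solution of $S$ and $q_v(r')=q'_v(r')-x$.
   Context: A financial system with payment priorities consists of: a finite set $V$ of banks; external assets $e_v\ge 0$ for each $v\in V$; a number $P\ge 1$ of priority levels; and a finite set of contracts, each of which is either a debt contract from a debtor $u$ to a creditor $v\neq u$ with weight $c>0$, or a credit default swap (CDS) from a debtor $u$ to a creditor $v\neq u$ in reference to a bank $w\notin\{u,v\}$ (the reference entity) with weight $c>0$. Every contract has a priority in $\{1,\dots,P\}$ (1 is the highest priority). It is assumed that every bank that is the reference entity of some CDS is the debtor of at least one debt contract of positive weight. Given a recovery rate vector $r\in[0,1]^V$: the liability of a contract $k$ is $l_k(r)=c$ if $k$ is a debt of weight $c$, and $l_k(r)=c\,(1-r_w)$ if $k$ is a CDS of weight $c$ in reference to $w$. For a bank $v$, $l_v(r)$ is the sum of the liabilities of the contracts with debtor $v$; $l_v^{(\rho)}(r)$ is the sum of the liabilities of contracts with debtor $v$ and priority $\rho$; and $l_v^{(\le\rho)}(r)=\sum_{i=1}^{\rho}l_v^{(i)}(r)$ (with $l_v^{(\le 0)}=0$). The payment on a contract $k$ with debtor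 $v$ and priority $\rho$ is $p_k(r)=l_k(r)\cdot\min\{1,\max\{0,(r_v l_v(r)-l_v^{(\le\rho-1)}(r))/l_v^{(\rho)}(r)\}\}$ (and $p_k(r)=0$ if $l_v^{(\rho)}(r)=0$). The assets of $v$ are $a_v(r)=e_v+\sum_k p_k(r)$, summing over contracts $k$ with creditor $v$. A vector $r\in[0,1]^V$ is a solution (clearing vector) if for every $v\in V$: $r_v=1$ when $a_v(r)\ge l_v(r)$, and $r_v=a_v(r)/l_v(r)$ when $a_v(r)<l_v(r)$. The payoff of $v$ is $q_v(r)=\max\{a_v(r)-l_v(r),0\}$. When $P=1$, payments reduce to $p_k(r)=r_v\,l_k(r)$ (principle of proportionality); this is called the base model. *)

From HB Require Import structures.
From mathcomp Require Import all_boot all_order all_algebra.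
Set Implicit Arguments. Unset Strict Implicit. Unset Printing Implicit Defensive.
Import Order.TTheory GRing.Theory Num.Theory.
Local Open Scope ring_scope.

(* A financial system with payment priorities, without the external assets
   (which are passed separately, so that S' only differs in e).  Contracts: finite type K.
   ref k = None  : k is a debt contract;
   ref k = Some w: k is a CDS in reference to w. *)
Record fsystem (R : realFieldType) (V K : finType) := FSystem {
  nprio : nat;
  debtor : K -> V;
  creditor : K -> V;
  weight : K -> R;
  ref : K -> option V;
  prio : K -> nat
}.

Section Model.
Variables (R : realFieldType) (V K : finType) (S : fsystem R V K) (e : V -> R).

Definition wf_system : Prop :=
  (forall u, 0 <= e u) /\
  (1 <= nprio S)%N /\
  (forall k, debtor S k <> creditor S k) /\
  (forall k, 0 < weight S k) /\
  (forall k w, ref S k = Some w -> w <> debtor S k /\ w <> creditor S k) /\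
  (forall k, (1 <= prio S k <= nprio S)%N) /\
  (forall k w, ref S k = Some w ->
     exists k', debtor S k' = w /\ ref S k' = None /\ 0 < weight S k').

Definition liab (r : V -> R) (k : K) : R :=
  match ref S k with
  | None => weight S k
  | Some w => weight S k * (1 - r w)
  end.

Definition lv (r : V -> R) (u : V) : R :=
  \sum_(k | debtor S k == u) liab r k.

Definition lvp (r : V -> R) (u : V) (rho : nat) : R :=
  \sum_(k | (debtor S k == u) && (prio S k == rho)) liab r k.

Definition lvle (r : V -> R) (u : V) (rho : nat) : R :=
  \sum_(1 <= i < rho.+1) lvp r u i.

Definition pay (r : V -> R) (k : K) : R :=
  let u := debtor S k in
  let rho := prio S k in
  if lvp r u rho == 0 then 0
  else liab r k * Num.min 1 (Num.max 0 ((r u * lv r u - lvle r u rho.-1) / lvp r u rho)).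

Definition assets (r : V -> R) (u : V) : R :=
  e u + \sum_(k | creditor S k == u) pay r k.

Definition is_solution (r : V -> R) : Prop :=
  (forall u, 0 <= r u <= 1) /\
  (forall u, (lv r u <= assets r u -> r u = 1) /\
             (assets r u < lv r u -> r u = assets r u / lv r u)).

Definition payoff (r : V -> R) (u : V) : R :=
  Num.max (assets r u - lv r u) 0.

End Model.

Definition add_ext (R : realFieldType) (V : finType) (e : V -> R) (v : V) (x : R)
  : V -> R := fun u => if u == v then e u + x else e u.

From HB Require Import structures.
From mathcomp Require Import all_boot all_order all_algebra.
From mathcomp Require Import lra.
Import Order.TTheory GRing.Theory Num.Theory.
Set Implicit Arguments. Unset Strict Implicit. Unset Printing Implicit Defensive.
Local Open Scope ring_scope.

(* Payments depend only on the recovery rates, not on the external assets, so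
   adding x to e_v shifts the assets of v by x and changes nothing else.  If v
   keeps a surplus above x in S', it is solvent already in S, hence its
   recovery rate 1 is still consistent with the clearing conditions of S. *)

Section AddExternalAssets.
Variables (R : realFieldType) (V K : finType) (S : fsystem R V K).
Variables (e : V -> R) (v : V) (x : R).
Hypothesis x_ge0 : 0 <= x.

Lemma assets_add_ext (r : V -> R) (u : V) :
  assets S (add_ext e v x) r u = assets S e r u + (if u == v then x else 0).
Proof.
rewrite /assets /add_ext; case: (u == v); rewrite ?addr0 //.
by rewrite -!addrA [x + _]addrC.
Qed.

Lemma payoff_add_ext_gt (r : V -> R) :
  x < payoff S (add_ext e v x) r v ->
  payoff S (add_ext e v x) r v = assets S e r v + x - lv S r v.
Proof.
rewrite /payoff assets_add_ext eqxx => x_lt_payoff.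
have [surplus_le0|//] := leP (assets S e r v + x - lv S r v) 0.
by move: x_lt_payoff x_ge0; rewrite max_r //; lra.
Qed.

Lemma solution_sub_ext (r : V -> R) :
  lv S r v < assets S e r v ->
  is_solution S (add_ext e v x) r -> is_solution S e r.
Proof.
move=> solvent_v [r01 clear']; split=> // u.
have [->|nuv] := eqVneq u v; last first.
  by move: (clear' u); rewrite assets_add_ext (negbTE nuv) addr0.
split=> [_|insolvent]; last by move: (lt_trans insolvent solvent_v); rewrite ltxx.
by apply: (clear' v).1; rewrite assets_add_ext eqxx ltW // ltr_wpDr.
Qed.

Lemma payoff_sub_ext (r : V -> R) :
  is_solution S (add_ext e v x) r ->
  x < payoff S (add_ext e v x) r v ->
  is_solution S e r /\ payoff S e r v = payoff S (add_ext e v x) r v - x.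
Proof.
move=> sol' big_payoff.
have payoff'E := payoff_add_ext_gt big_payoff.
have solvent_v : lv S r v < assets S e r v by lra.
split; first exact: solution_sub_ext sol'.
by rewrite payoff'E /payoff max_l; lra.
Qed.

End AddExternalAssets.

Theorem mainTheorem5 (R : realFieldType) (V K : finType) (S : fsystem R V K)
  (e : V -> R) (v : V) (x Q : R) :
  wf_system S e -> 0 <= x -> 0 <= Q ->
  (forall r : V -> R, is_solution S e r -> payoff S e r v <= Q) ->
  (forall r' : V -> R, is_solution S (add_ext e v x) r' ->
      payoff S (add_ext e v x) r' v <= Q + x) /\
  (forall r' : V -> R, is_solution S (add_ext e v x) r' ->
      x < payoff S (add_ext e v x) r' v ->
      is_solution S e r' /\
      payoff S e r' v = payoff S (add_ext e v x) r' v - x).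
Proof.
move=> _ x_ge0 Q_ge0 payoff_le_Q; split=> [r sol'|]; last exact: payoff_sub_ext.
have [small|big] := leP (payoff S (add_ext e v x) r v) x; first lra.
have [sol eq_payoff] := payoff_sub_ext x_ge0 sol' big.
have := payoff_le_Q r sol; lra.
Qed.
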